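(* Let $n\ge 3$ and $\mathbf h\in\mathbb{R}^{\binom{n+1}{2}}$, decomposed as $\mathbf h=(\mathbf h_0,\mathbf h_1,\mathbf h_2)$. Assume $J_{n,2}\mathbf h\ge 0$ and $\mathbf h_2\not\ge 0$. Then $$P(\mathbf h_1)\ge 1,\quad R(J_{n-1,0}\mathbf h_0+\mathbf h_1)\ge 1,\quad R(J_{n-1,1}\mathbf h_1+\mathbf h_2)\ge 1.$$
   Context: For a real vector $\mathbf x$, $P(\mathbf x)$ is the number of positive components and $R(\mathbf x)$ the number of nonzero components; inequalities are componentwise, and $\mathbf x\not\ge 0$ means some component is negative. $J_{m,j}$ is the matrix, with respect to the left lexicographic bases of degree-$j$ and degree-$(j+1)$ monomials in $m$ variables, of multiplication by the sum of the variables ($J_{n,j}$ in $x_1,\dots,x_n$, $J_{n-1,j}$ in $x_2,\dots,x_n$). If $\mathbf h$ is the coordinate vector of the quadratic form $A(x)=x_1^2A_0+x_1A_1(x_2,\dots,x_n)+A_2(x_2,\dots,x_n)$ ($A_j$ homogeneous of degree $j$), then $\mathbf h_j$ is the coordinate vector of $A_j$ in the left lexicographic basis of degree-$j$ monomials in $x_2,\dots,x_n$. *)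

From HB Require Import structures.
From mathcomp Require Import all_boot all_order all_algebra.
Set Implicit Arguments. Unset Strict Implicit. Unset Printing Implicit Defensive.
Import Order.TTheory GRing.Theory Num.Theory.
Local Open Scope ring_scope.

(* Exponent vectors (length m) of the degree-j monomials in m variables,
   listed in the left lexicographic order x1^j > x1^(j-1) x2 > ... *)
Fixpoint mons (m j : nat) : seq (seq nat) :=
  match m with
  | 0 => if j == 0%N then [:: [::]] else [::]
  | m'.+1 => flatten [seq [seq (j - i)%N :: s | s <- mons m' i] | i <- iota 0 j.+1]
  end.

(* J_{m,j}: matrix of multiplication by x_1 + ... + x_m from degree j to degree j+1,
   w.r.t. the left lexicographic bases. Entry (r,c) counts the k with
   monomial r = x_k * monomial c. *)
Definition Jmx (R : pzRingType) (m j : nat) :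
  'M[R]_(size (mons m j.+1), size (mons m j)) :=
  \matrix_(r, c) (\sum_(k < m)
     ((nth [::] (mons m j.+1) r == incr_nth (nth [::] (mons m j) c) k) : nat)%:R).

(* the i-th coordinate of a column vector (0 if out of range) *)
Definition coord_at (R : pzRingType) (k : nat) (v : 'cV[R]_k) (i : nat) : R :=
  \sum_(r < k | nat_of_ord r == i) v r 0.

(* For h the coordinate vector of the quadratic form
   A = x1^2 A0 + x1 A1(x2..xn) + A2(x2..xn) in n variables, hpart n j h is the
   coordinate vector of A_j in the left lexicographic basis of degree-j monomials
   in x2..xn. *)
Definition hpart (R : pzRingType) (n j : nat) (h : 'cV[R]_(size (mons n 2))) :
  'cV[R]_(size (mons n.-1 j)) :=
  \col_i coord_at h (index ((2 - j)%N :: nth [::] (mons n.-1 j) i) (mons n 2)).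

Arguments hpart {R} n j h.

Definition Ppos (R : numDomainType) (k : nat) (x : 'cV[R]_k) : nat :=
  #|[set i : 'I_k | 0 < x i 0]|.
Definition Rnz (R : numDomainType) (k : nat) (x : 'cV[R]_k) : nat :=
  #|[set i : 'I_k | x i 0 != 0]|.

Definition nonneg (R : numDomainType) (k : nat) (x : 'cV[R]_k) : Prop :=
  forall i, 0 <= x i 0.

Example mons_3_2 : mons 3 2 = [:: [:: 2;0;0]; [:: 1;1;0]; [:: 1;0;1];
                                  [:: 0;2;0]; [:: 0;1;1]; [:: 0;0;2]]%N.
Proof. by []. Qed.
Example size_mons_small :
  [seq size (mons n 2) | n <- iota 1 6] = [seq 'C(n.+1, 2) | n <- iota 1 6].
Proof. by []. Qed.

(* Read the cubic form (x1 + ... + xn) A coefficientwise: the coefficient of a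
   monomial r is the sum of the coefficients of A at the monomials r / x_k, x_k | r.
   At x_p^3 only x_p^2 contributes, so every diagonal coefficient of A is
   nonnegative; this gives h_0 >= 0 and the diagonal of h_2 nonnegative.  At
   x1 x^e, for a negative coefficient of x^e in A_2, the terms coming from A_1
   must compensate it, so the coefficient of some x_p in A_1 is positive.  Then the
   x_p-entry of J_{n-1,0} h_0 + h_1 is h_0 + h_1(x_p) > 0, and the x_p^2-entry
   of J_{n-1,1} h_1 + h_2 is h_1(x_p) + h_2(x_p^2) > 0. *)
From mathcomp Require Import all_boot all_order all_algebra.
Import Order.TTheory GRing.Theory Num.Theory.
Set Implicit Arguments. Unset Strict Implicit. Unset Printing Implicit Defensive.

Lemma monsS m j : mons m.+1 j =
  flatten [seq [seq (j - i)%N :: s | s <- mons m i] | i <- iota 0 j.+1].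
Proof. by []. Qed.

Lemma mons0 m : mons m 0 = [:: nseq m 0%N].
Proof. by elim: m => [|m IHm] //; rewrite monsS /= IHm. Qed.

Lemma mem_mons m j s : (s \in mons m j) = (size s == m) && (sumn s == j).
Proof.
elim: m j s => [|m IHm] j s; first by case: j => [|j]; case: s.
rewrite monsS; apply/flattenP/idP.
  move=> [_ /mapP[i ij ->] /mapP[t t_i ->]] /=.
  move: ij t_i; rewrite mem_iota ltnS IHm => /andP[_ le_ij] /andP[/eqP-> /eqP->].
  by rewrite subnK ?eqxx.
case: s => [|a s] // /andP[/eqP[size_s] /eqP sum_as].
exists [seq (j - sumn s)%N :: t | t <- mons m (sumn s)].
  by apply/mapP; exists (sumn s); rewrite // mem_iota ltnS -sum_as leq_addl.
by apply/mapP; exists s; rewrite ?IHm ?size_s ?eqxx // -sum_as addnK.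
Qed.

Lemma uniq_mons m j : uniq (mons m j).
Proof.
elim: m j => [|m IHm] j; first by case: j.
rewrite monsS; have : all (fun i => i <= j)%N (iota 0 j.+1).
  by apply/allP => i; rewrite mem_iota ltnS.
elim: (iota 0 j.+1) (iota_uniq 0 j.+1) => [|i l IHl] //= /andP[il ul] /andP[ij lj].
rewrite cat_uniq IHl // andbT map_inj_uniq ?IHm; last by move=> ? ? [].
apply/hasPn => _ /flattenP[_ /mapP[k kl ->] /mapP[t _ ->]].
apply/mapP => -[u _ [eq_ji _]]; have kj := allP lj k kl.
suff eq_ki : k = i by rewrite -eq_ki kl in il.
by apply/eqP; rewrite -(eqn_add2r (j - k)) subnKC // eq_ji subnKC.
Qed.

Definition decr_nth (s : seq nat) k := set_nth 0 s k (nth 0 s k).-1.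

Lemma eq_incr_nth m (r s : seq nat) k : size r = m -> size s = m -> (k < m)%N ->
  (r == incr_nth s k) = (0 < nth 0 r k)%N && (s == decr_nth r k).
Proof.
move=> size_r size_s lt_km; rewrite /decr_nth.
apply/eqP/andP => [->|[r_k_gt0 /eqP->]].
  rewrite nth_incr_nth eqxx /=; split => //; apply/eqP/(@eq_from_nth _ 0).
    by rewrite size_set_nth size_incr_nth size_s lt_km; apply/esym/maxn_idPr.
  by move=> i _; rewrite nth_set_nth /= nth_incr_nth; case: eqVneq => [->|].
apply/(@eq_from_nth _ 0) => [|i _].
  by rewrite size_incr_nth size_set_nth size_r (maxn_idPr lt_km) lt_km.
rewrite nth_incr_nth nth_set_nth /= eq_sym.
by case: eqVneq => [->|_]; rewrite ?add1n ?prednK.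
Qed.

Lemma mem_decr_nth m j r k : r \in mons m j.+1 -> (0 < nth 0 r k)%N ->
  decr_nth r k \in mons m j.
Proof.
rewrite !mem_mons => /andP[/eqP size_r /eqP sum_r] r_k_gt0.
have lt_kr : (k < size r)%N by rewrite ltnNge; apply: contraTN r_k_gt0 => /(nth_default 0)->.
rewrite size_set_nth (maxn_idPr lt_kr) size_r eqxx sumn_set_nth_ltn // sum_r.
by rewrite -[X in (_ - X)%N](prednK r_k_gt0) addSn subSS addnK eqxx.
Qed.

(* The exponent vector of x_p^c in m variables numbered from 0. *)
Definition mpow m p c := set_nth 0 (nseq m 0%N) p c.

Lemma nth_mpow m p c k : nth 0 (mpow m p c) k = if k == p then c else 0%N.
Proof. by rewrite nth_set_nth /= nth_nseq; case: eqP => //; case: ifP. Qed.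

Lemma mpow_mons m p c : (p < m)%N -> mpow m p c \in mons m c.
Proof.
move=> lt_pm; rewrite mem_mons size_set_nth size_nseq (maxn_idPr lt_pm) eqxx.
by rewrite sumn_set_nth_ltn ?size_nseq // sumn_nseq nth_nseq lt_pm mul0n add0n subn0 eqxx.
Qed.

Lemma mons1_mpow m t : t \in mons m 1 -> exists2 p, (p < m)%N & t = mpow m p 1.
Proof.
rewrite mem_mons => /andP[/eqP <-]; elim: t => [|[|[|a]] t IHt] //=.
  by rewrite add0n => /IHt[p lt_pt t_eq]; exists p.+1; rewrite // {1}t_eq.
by rewrite add1n eqSS => /natnseq0P t0; exists 0%N; rewrite // {1}t0.
Qed.

Section Coefficients.
Variable R : pzRingType.
Local Open Scope ring_scope.

(* The entry of v at the monomial s, where v is indexed by the monomials in L;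
   it is 0 when s is not in L. *)
Definition mcoef (L : seq (seq nat)) (v : 'cV[R]_(size L)) (s : seq nat) : R :=
  \sum_(c < size L | nth [::] L c == s) v c 0.

Lemma mcoef_nth L (v : 'cV[R]_(size L)) (i : 'I_(size L)) :
  uniq L -> mcoef v (nth [::] L i) = v i 0.
Proof. by move=> uL; rewrite /mcoef (big_pred1 i) // => c /=; rewrite nth_uniq. Qed.

Lemma coord_at_index L (v : 'cV[R]_(size L)) s :
  uniq L -> coord_at v (index s L) = mcoef v s.
Proof.
move=> uL; apply: eq_bigl => c; have [s_L | s_notL] := boolP (s \in L).
  by apply/eqP/eqP => [->|<-]; rewrite ?nth_index ?index_uniq.
rewrite (memNindex s_notL) (ltn_eqF (ltn_ord c)); apply/esym/negbTE.
by apply: contra s_notL => /eqP <-; apply: mem_nth.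
Qed.

Lemma mcoefD L (v w : 'cV[R]_(size L)) s : mcoef (v + w) s = mcoef v s + mcoef w s.
Proof. by rewrite /mcoef -big_split; apply: eq_bigr => c _; rewrite mxE. Qed.

Lemma hpartE n j (h : 'cV[R]_(size (mons n 2))) i :
  hpart n j h i 0 = mcoef h ((2 - j)%N :: nth [::] (mons n.-1 j) i).
Proof. by rewrite mxE coord_at_index // uniq_mons. Qed.

Lemma mcoef_hpart n j (h : 'cV[R]_(size (mons n 2))) t : t \in mons n.-1 j ->
  mcoef (hpart n j h) t = mcoef h ((2 - j)%N :: t).
Proof.
move=> t_mons.
have t_idx : (index t (mons n.-1 j) < size (mons n.-1 j))%N by rewrite index_mem.
rewrite -{1}(nth_index [::] t_mons) -[index t _]/(val (Ordinal t_idx)).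
by rewrite mcoef_nth ?uniq_mons // hpartE /= nth_index.
Qed.

Lemma mcoef_Jmx m j (v : 'cV[R]_(size (mons m j))) r : r \in mons m j.+1 ->
  mcoef (Jmx R m j *m v) r =
  \sum_(k < m | (0 < nth 0%N r k)%N) mcoef v (decr_nth r k).
Proof.
move=> r_mons; have size_r : size r = m by move: r_mons; rewrite mem_mons => /andP[/eqP].
have r_idx : (index r (mons m j.+1) < size (mons m j.+1))%N by rewrite index_mem.
rewrite -{1}(nth_index [::] r_mons) -[index r _]/(val (Ordinal r_idx)) mcoef_nth ?uniq_mons //.
rewrite mxE; under eq_bigr do rewrite mxE mulr_suml.
rewrite exchange_big [RHS]big_mkcond /= nth_index //; apply: eq_bigr => k _.
have eq_r (c : 'I_(size (mons m j))) : (r == incr_nth (nth [::] (mons m j) c) k)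
    = (0 < nth 0%N r k)%N && (nth [::] (mons m j) c == decr_nth r k).
  apply: (eq_incr_nth size_r) => //.
  by move: (mem_nth [::] (ltn_ord c)); rewrite mem_mons => /andP[/eqP].
case: ifP => r_k; last by rewrite big1 // => c _; rewrite eq_r r_k mul0r.
rewrite /mcoef [RHS]big_mkcond; apply: eq_bigr => c _.
by rewrite eq_r r_k; case: eqP; rewrite ?mul1r ?mul0r.
Qed.

Lemma mcoef_Jmx_mpow m j p (v : 'cV[R]_(size (mons m j))) : (p < m)%N ->
  mcoef (Jmx R m j *m v) (mpow m p j.+1) = mcoef v (mpow m p j).
Proof.
move=> lt_pm; rewrite mcoef_Jmx ?mpow_mons // (big_pred1 (Ordinal lt_pm)) => [|k].
  by rewrite /decr_nth nth_mpow eqxx /mpow set_set_nth eqxx.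
by rewrite nth_mpow -[RHS](inj_eq val_inj) /=; case: eqP.
Qed.

End Coefficients.

Section Signs.
Variable R : numDomainType.
Local Open Scope ring_scope.

Lemma mcoef_ge0 L (v : 'cV[R]_(size L)) s : nonneg v -> 0 <= mcoef v s.
Proof. by move=> v_ge0; apply: sumr_ge0. Qed.

Lemma nonneg_Jmx_mul m j (v : 'cV[R]_(size (mons m j))) :
  nonneg v -> nonneg (Jmx R m j *m v).
Proof.
move=> v_ge0 r; rewrite mxE; apply: sumr_ge0 => c _; apply: mulr_ge0 (v_ge0 c).
by rewrite mxE; apply: sumr_ge0 => k _; apply: ler0n.
Qed.

Lemma Rnz_gt0 L (v : 'cV[R]_(size L)) s : mcoef v s != 0 -> (0 < Rnz v)%N.
Proof.
move=> coef_neq0; rewrite card_gt0; apply/set0Pn.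
case: (pickP (fun i => v i 0 != 0)) => [i v_i_neq0 | v_eq0]; first by exists i; rewrite inE.
by move: coef_neq0; rewrite /mcoef big1 ?eqxx // => i _; apply/eqP/negbFE/v_eq0.
Qed.

End Signs.

Local Open Scope ring_scope.

Lemma Ppos_gt0 (R : realDomainType) L (v : 'cV[R]_(size L)) s :
  0 < mcoef v s -> (0 < Ppos v)%N.
Proof.
move=> coef_gt0; rewrite card_gt0; apply/set0Pn.
case: (pickP (fun i => 0 < v i 0)) => [i v_i_gt0 | v_le0]; first by exists i; rewrite inE.
have : mcoef v s <= 0 by apply: sumr_le0 => i _; rewrite leNgt v_le0.
by rewrite leNgt coef_gt0.
Qed.

Section QuadraticForm.
Variables (R : realDomainType) (n : nat) (h : 'cV[R]_(size (mons n.+1 2))).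
Hypothesis Jh_ge0 : nonneg (Jmx R n.+1 2 *m h).

Lemma mcoef_sq_ge0 p : (p < n.+1)%N -> 0 <= mcoef h (mpow n.+1 p 2).
Proof. by move=> lt_pn; rewrite -mcoef_Jmx_mpow // mcoef_ge0. Qed.

Lemma hpart0_ge0 : nonneg (hpart n.+1 0 h).
Proof.
move=> i; rewrite hpartE subn0; set t := nth _ _ _.
have := mem_nth [::] (ltn_ord i); rewrite -/t mem_mons => /andP[/eqP size_t /natnseq0P t0].
by rewrite t0 size_t; apply: (mcoef_sq_ge0 (ltn0Sn n)).
Qed.

Lemma hpart2_mpow_ge0 p : (p < n)%N -> 0 <= mcoef (hpart n.+1 2 h) (mpow n p 2).
Proof.
move=> lt_pn; rewrite mcoef_hpart ?mpow_mons // subnn.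
exact: (mcoef_sq_ge0 (p := p.+1)).
Qed.

Lemma hpart1_has_pos : (exists i, hpart n.+1 2 h i 0 < 0) ->
  exists2 t, t \in mons n 1 & 0 < mcoef (hpart n.+1 1 h) t.
Proof.
move=> [i]; rewrite hpartE subnn; set e := nth _ _ _ => h2_neg.
have e_mons : e \in mons n 2 := mem_nth [::] (ltn_ord i).
have x1e_mons : (1%N :: e) \in mons n.+1 3.
  by move: e_mons; rewrite !mem_mons /= eqSS add1n eqSS.
have : 0 <= mcoef h (0%N :: e) +
              \sum_(k < n | (0 < nth 0%N e k)%N) mcoef h (1%N :: decr_nth e k).
  move: (mcoef_ge0 (1%N :: e) Jh_ge0).
  by rewrite mcoef_Jmx // big_mkcond big_ord_recl -big_mkcond.
case: (pickP (fun k : 'I_n => (0 < nth 0%N e k)%N && (0 < mcoef h (1%N :: decr_nth e k))))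
  => [k /andP[e_k_gt0 coef_gt0] | coef_le0].
  have t_mons : decr_nth e k \in mons n 1 by apply: mem_decr_nth.
  by exists (decr_nth e k); rewrite // mcoef_hpart.
have sum_le0 : \sum_(k < n | (0 < nth 0%N e k)%N) mcoef h (1%N :: decr_nth e k) <= 0.
  by apply: sumr_le0 => k e_k_gt0; move: (coef_le0 k); rewrite e_k_gt0 leNgt /= => ->.
by move/le_lt_trans/(_ (ltr_leD h2_neg sum_le0)); rewrite addr0 ltxx.
Qed.

End QuadraticForm.

Theorem lemma4p1 (R : realFieldType) (n : nat) (hn : (3 <= n)%N)
  (h : 'cV[R]_(size (mons n 2))) :
  nonneg (Jmx R n 2 *m h) ->
  (exists i, hpart n 2 h i 0 < 0) ->
  [/\ (1 <= Ppos (hpart n 1 h))%N,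
      (1 <= Rnz (Jmx R n.-1 0 *m hpart n 0 h + hpart n 1 h))%N &
      (1 <= Rnz (Jmx R n.-1 1 *m hpart n 1 h + hpart n 2 h))%N].
Proof.
case: n hn h => [|n] // _ h Jh_ge0 h2_neg.
have [t t_mons h1_pos] := hpart1_has_pos Jh_ge0 h2_neg.
have [p lt_pn t_eq] := mons1_mpow t_mons; rewrite {}t_eq in h1_pos.
split.
- exact: Ppos_gt0 h1_pos.
- apply: (@Rnz_gt0 _ _ _ (mpow n p 1)); rewrite mcoefD gt_eqF // ltr_wpDl //.
  exact/mcoef_ge0/nonneg_Jmx_mul/hpart0_ge0.
- apply: (@Rnz_gt0 _ _ _ (mpow n p 2)); rewrite mcoefD mcoef_Jmx_mpow // gt_eqF //.
  by rewrite ltr_wpDr // hpart2_mpow_ge0.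
Qed.
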